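(* Let $\mathcal{X},\mathcal{A}$ be finite sets, and consider a stationary MFG $(\mathcal{X},\mathcal{A},p,r,\gamma)$ with $\gamma\in[0,1)$. For $\mu\in\Delta_{\mathcal{X}}$ and $\pi\in\Pi$, let $$J_\gamma(\pi;\mu)=\mathbb{E}\Big[\sum_{n\ge 0}\gamma^n r(x_n,a_n,\mu)\Big],\quad x_0\sim\mu,\ a_n\sim\pi(\cdot\mid x_n),\ x_{n+1}\sim p(\cdot\mid x_n,a_n,\mu),$$ and $\mathbf{BR}(\mu)=\operatorname{argmax}_{\pi\in\Pi}J_\gamma(\pi;\mu)$. Assume that (1) for every $\mu\in\Delta_{\mathcal{X}}$, $\mathbf{BR}(\mu)$ consists of a single policy $\pi^*_\mu$, and (2) the map $\Delta_{\mathcal{X}}\to\Pi$, $\mu\mapsto\pi^*_\mu$, is continuous (with $\Pi$ carrying its topology as a subset of $\mathbb{R}^{\mathcal{X}\times\mathcal{A}}$). Then this map is constant: there exists a single deterministic policy $\pi$ such that $\mathbf{BR}(\mu)=\{\pi\}$ for all $\mu\in\Delta_{\mathcal{X}}$.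
   Context: $\Delta_{\mathcal{L}}$ denotes the set of probability distributions on a finite set $\mathcal{L}$. $\Pi=(\Delta_{\mathcal{A}})^{\mathcal{X}}$ is the set of stationary policies, a policy $\pi$ mapping each state $x$ to a distribution $\pi(\cdot\mid x)\in\Delta_{\mathcal{A}}$; a policy is deterministic if each $\pi(\cdot\mid x)$ is a Dirac mass. The transition kernel is $p:\mathcal{X}\times\mathcal{A}\times\Delta_{\mathcal{X}}\to\Delta_{\mathcal{X}}$ and the reward is $r:\mathcal{X}\times\mathcal{A}\times\Delta_{\mathcal{X}}\to\mathbb{R}$; in $J_\gamma(\pi;\mu)$ the population distribution $\mu$ is held fixed. *)

From HB Require Import structures.
From mathcomp Require Import all_boot all_order all_algebra.
From mathcomp Require Import all_classical all_reals all_analysis.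
Set Implicit Arguments. Unset Strict Implicit. Unset Printing Implicit Defensive.
Import Order.TTheory GRing.Theory Num.Theory.
Import numFieldNormedType.Exports.
Import ArrowAsProduct.
Local Open Scope classical_set_scope.
Local Open Scope ring_scope.

Section MFG.
Variables (R : realType) (X A : finType).

Definition is_dist (T : finType) (m : T -> R) : Prop :=
  (forall t, 0 <= m t) /\ \sum_(t : T) m t = 1.

Definition Delta : set (X -> R) := [set m | is_dist m].

(* Pi = (Delta_A)^X : stationary policies, pi x a = pi(a | x) *)
Definition Policies : set (X -> A -> R) := [set pi | forall x, is_dist (pi x)].

Definition deterministic (pi : X -> A -> R) : Prop :=
  forall x, exists a : A, pi x = (fun b => if b == a then 1 else 0).

(* p x a mu y = p(y | x, a, mu),  r x a mu = r(x, a, mu) *)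
Variables (p : X -> A -> (X -> R) -> X -> R) (r : X -> A -> (X -> R) -> R).

(* law of x_n when x_0 ~ mu, a_k ~ pi(.|x_k), x_{k+1} ~ p(.|x_k,a_k,mu) *)
Fixpoint state_law (pi : X -> A -> R) (mu : X -> R) (n : nat) : X -> R :=
  match n with
  | 0 => mu
  | n'.+1 => fun y => \sum_(x : X) \sum_(a : A)
                 state_law pi mu n' x * pi x a * p x a mu y
  end.

Definition exp_reward (pi : X -> A -> R) (mu : X -> R) (n : nat) : R :=
  \sum_(x : X) \sum_(a : A) state_law pi mu n x * pi x a * r x a mu.

Definition J (gamma : R) (pi : X -> A -> R) (mu : X -> R) : R :=
  limn (fun N => \sum_(0 <= n < N) gamma ^+ n * exp_reward pi mu n).

Definition BR (gamma : R) (mu : X -> R) : set (X -> A -> R) :=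
  [set pi | Policies pi /\ forall pi', Policies pi' -> J gamma pi' mu <= J gamma pi mu].

End MFG.

From HB Require Import structures.
From mathcomp Require Import all_boot all_order all_algebra.
From mathcomp Require Import all_classical all_reals all_analysis.
From mathcomp Require Import ring lra.
Set Implicit Arguments. Unset Strict Implicit. Unset Printing Implicit Defensive.
Import Order.TTheory GRing.Theory Num.Theory.
Import numFieldNormedType.Exports.
Import ArrowAsProduct.
Local Open Scope classical_set_scope.
Local Open Scope ring_scope.

(* For a fixed population [mu], some deterministic policy is optimal: the value
   [V] of any policy [pi] solves a linear Bellman equation (invertible because
   [gamma < 1]), the policy acting greedily for [V] is deterministic and has a
   nonnegative Bellman residual against [V], and telescoping the discounted sum
   of residuals along its trajectory gives [J pi <= J pi']. So a unique best
   response is deterministic. A continuous map from the convex set [Delta] into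
   deterministic policies has, on every segment, coordinates that are continuous
   with values in {0, 1}, hence constant. *)

Lemma dist_card_gt0 {R : realType} {T : finType} {m : T -> R} :
  is_dist m -> (0 < #|T|)%N.
Proof.
move=> [_ m1]; rewrite lt0n; apply/negP => /eqP /card0_eq T0.
by move: m1; rewrite big_pred0 // => /eqP; rewrite eq_sym oner_eq0.
Qed.

Lemma dist_le1 (R : realType) (T : finType) (m : T -> R) t : is_dist m -> m t <= 1.
Proof.
move=> [m0 <-]; rewrite (bigD1 t) //= lerDl.
by apply: sumr_ge0 => s _; exact: m0.
Qed.

Section DiscountedStochasticMatrix.
Variables (R : realFieldType) (n : nat) (P : 'M[R]_n) (gamma : R).
Hypotheses (P_ge0 : forall i j, 0 <= P i j) (P_sum1 : forall i, \sum_j P i j = 1).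
Hypotheses (gamma_ge0 : 0 <= gamma) (gamma_lt1 : gamma < 1).

(* A left null vector [u] of [1 - gamma P] satisfies [u = gamma u P], so its
   l1-norm is at most [gamma] times itself. *)
Lemma unitmx_discounted_stochastic : 1%:M - gamma *: P \in unitmx.
Proof.
rewrite unitmxE unitfE; apply/det0P => -[u u_neq0].
rewrite mulmxBr mulmx1 -scalemxAr => /eqP; rewrite subr_eq0 => /eqP u_fix.
have u_j j : u 0 j = gamma * \sum_i u 0 i * P i j.
  by rewrite [in LHS]u_fix !mxE.
set S := \sum_j `|u 0 j|.
have S_le : S <= gamma * S.
  apply: (@le_trans _ _ (\sum_j gamma * \sum_i `|u 0 i| * P i j)).
    apply: ler_sum => j _; rewrite u_j normrM ger0_norm // ler_wpM2l //.
    apply: le_trans (ler_norm_sum _ _ _) _; apply: ler_sum => i _.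
    by rewrite normrM (ger0_norm (P_ge0 i j)).
  rewrite -mulr_sumr exchange_big /=.
  by under eq_bigr do rewrite -mulr_sumr P_sum1 mulr1.
have S_le0 : S <= 0.
  have : (1 - gamma) * S <= 0 by rewrite mulrBl mul1r subr_le0.
  by rewrite pmulr_rle0 // subr_gt0.
apply: (negP u_neq0); apply/eqP/matrixP => i j; rewrite (ord1 i) mxE.
apply/eqP; rewrite -normr_eq0 eq_le normr_ge0 andbT; apply: le_trans S_le0.
by rewrite /S (bigD1 j) //= lerDl; apply: sumr_ge0 => k _.
Qed.

End DiscountedStochasticMatrix.

Section Geometric.
Variables (R : realType) (gamma : R).
Hypotheses (gamma_ge0 : 0 <= gamma) (gamma_lt1 : gamma < 1).

Lemma geometric_sum_le N : \sum_(0 <= n < N) gamma ^+ n <= (1 - gamma)^-1.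
Proof.
have gamma1 : 0 < 1 - gamma by rewrite subr_gt0.
have sumE : (1 - gamma) * \sum_(0 <= n < N) gamma ^+ n = 1 - gamma ^+ N.
  elim: N => [|N IH]; first by rewrite big_geq // expr0 mulr0 subrr.
  by rewrite big_nat_recr //= mulrDr IH exprS; ring.
rewrite -(ler_pM2l gamma1) sumE mulfV ?gt_eqF // gerBl.
exact: exprn_ge0.
Qed.

Lemma cvg_geometric_bounded (w : nat -> R) (M : R) : (forall n, `|w n| <= M) ->
  (fun n => gamma ^+ n * w n) @ \oo --> 0.
Proof.
move=> w_le.
have gammaM : (fun n => gamma ^+ n * M) @ \oo --> 0.
  by rewrite -(mul0r M); apply: cvgMr_tmp; apply: cvg_expr; rewrite ger0_norm.
have NgammaM : (fun n => - (gamma ^+ n * M)) @ \oo --> 0.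
  by rewrite -oppr0; exact: cvgN.
apply: (squeeze_cvgr _ NgammaM gammaM); apply: nearW => n.
rewrite -ler_norml normrM (ger0_norm (exprn_ge0 n gamma_ge0)).
by rewrite ler_wpM2l // exprn_ge0.
Qed.

End Geometric.

Section PolicyEvaluation.
Variables (R : realType) (X A : finType).
Variables (p : X -> A -> (X -> R) -> X -> R) (r : X -> A -> (X -> R) -> R).
Variables (gamma : R) (mu : X -> R).
Hypothesis p_dist : forall x a, is_dist (p x a mu).
Hypotheses (gamma_ge0 : 0 <= gamma) (gamma_lt1 : gamma < 1).
Hypothesis mu_dist : is_dist mu.

Definition mean (m V : X -> R) : R := \sum_x m x * V x.

Definition policy_transition (pi : X -> A -> R) y z : R := \sum_a pi y a * p y a mu z.

Definition policy_reward (pi : X -> A -> R) y : R := \sum_a pi y a * r y a mu.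

Definition action_value (V : X -> R) y a : R := r y a mu + gamma * mean (p y a mu) V.

Definition bellman_residual (pi : X -> A -> R) (V : X -> R) y : R :=
  policy_reward pi y + gamma * mean (policy_transition pi y) V - V y.

Definition discounted_residual (pi : X -> A -> R) (V : X -> R) N : R :=
  \sum_(0 <= n < N) gamma ^+ n * mean (state_law p pi mu n) (bellman_residual pi V).

Lemma state_lawS pi n y :
  state_law p pi mu n.+1 y = \sum_x state_law p pi mu n x * policy_transition pi x y.
Proof.
apply: eq_bigr => x _; rewrite mulr_sumr.
by apply: eq_bigr => a _; rewrite mulrA.
Qed.

Lemma exp_rewardE pi n :
  exp_reward p r pi mu n = mean (state_law p pi mu n) (policy_reward pi).
Proof.
apply: eq_bigr => x _; rewrite mulr_sumr.
by apply: eq_bigr => a _; rewrite mulrA.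
Qed.

Lemma policy_transition_dist pi y : Policies pi -> is_dist (policy_transition pi y).
Proof.
move=> pi_pol; split.
  move=> z; apply: sumr_ge0 => a _.
  by apply: mulr_ge0; [exact: (pi_pol y).1 | exact: (p_dist y a).1].
rewrite exchange_big /= -(pi_pol y).2; apply: eq_bigr => a _.
by rewrite -mulr_sumr (p_dist y a).2 mulr1.
Qed.

Lemma state_law_dist pi n : Policies pi -> is_dist (state_law p pi mu n).
Proof.
move=> pi_pol; elim: n => [|n [law0 law1]] //; split.
  move=> y; rewrite state_lawS; apply: sumr_ge0 => x _.
  by apply: mulr_ge0; [exact: law0 | exact: (policy_transition_dist x pi_pol).1].
under eq_bigr do rewrite state_lawS.
rewrite exchange_big /= -law1; apply: eq_bigr => x _.
by rewrite -mulr_sumr (policy_transition_dist x pi_pol).2 mulr1.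
Qed.

Lemma mean_state_lawS pi n V :
  mean (state_law p pi mu n.+1) V =
  mean (state_law p pi mu n) (fun y => mean (policy_transition pi y) V).
Proof.
rewrite /mean; under eq_bigr do rewrite state_lawS mulr_suml.
rewrite exchange_big /=; apply: eq_bigr => x _; rewrite mulr_sumr.
by apply: eq_bigr => z _; rewrite mulrA.
Qed.

Lemma mean_lin m k U V W :
  mean m (fun y => U y + k * V y - W y) = mean m U + k * mean m V - mean m W.
Proof.
rewrite /mean mulr_sumr -big_split -sumrB /=; apply: eq_bigr => y _.
by rewrite mulrBr mulrDr mulrCA.
Qed.

Lemma norm_mean_le m V : is_dist m -> `|mean m V| <= \sum_y `|V y|.
Proof.
move=> m_dist; apply: (le_trans (ler_norm_sum _ _ _)).
apply: ler_sum => y _; rewrite normrM (ger0_norm (m_dist.1 y)).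
by rewrite ler_piMl // dist_le1.
Qed.

Lemma discounted_return_telescope pi V N :
  \sum_(0 <= n < N) gamma ^+ n * exp_reward p r pi mu n =
  mean mu V + discounted_residual pi V N - gamma ^+ N * mean (state_law p pi mu N) V.
Proof.
elim: N => [|N IH]; first by rewrite /discounted_residual !big_geq // expr0 mul1r addr0 subrr.
rewrite /discounted_residual !big_nat_recr //= -/(discounted_residual pi V N) IH.
rewrite exp_rewardE mean_state_lawS /bellman_residual mean_lin exprS.
ring.
Qed.

Lemma J_residual pi V : Policies pi -> cvgn (discounted_residual pi V) ->
  J p r gamma pi mu = mean mu V + limn (discounted_residual pi V).
Proof.
move=> pi_pol D_cvg; rewrite -[RHS]subr0; apply: (cvg_lim (@Rhausdorff R)).
under eq_fun do rewrite (discounted_return_telescope pi V).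
apply: cvgB; first exact: cvgD (cvg_cst _) D_cvg.
exact: (cvg_geometric_bounded gamma_ge0 gamma_lt1
  (fun N => norm_mean_le V (state_law_dist N pi_pol))).
Qed.

Lemma is_cvgn_discounted_residual pi V : Policies pi ->
  (forall y, 0 <= bellman_residual pi V y) -> cvgn (discounted_residual pi V).
Proof.
move=> pi_pol res_ge0; apply: nondecreasing_is_cvgn.
  move=> n m nm; rewrite /discounted_residual (big_cat_nat (leq0n n) nm) /= lerDl.
  apply: sumr_ge0 => k _; apply: mulr_ge0; first exact: exprn_ge0.
  apply: sumr_ge0 => y _.
  by apply: mulr_ge0; [exact: (state_law_dist k pi_pol).1 | exact: res_ge0].
exists ((\sum_y `|bellman_residual pi V y|) * (1 - gamma)^-1) => _ [N _ <-].
apply: (@le_trans _ _ (\sum_(0 <= n < N) gamma ^+ n * \sum_y `|bellman_residual pi V y|)).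
  apply: ler_sum => n _; apply: ler_wpM2l; first exact: exprn_ge0.
  exact: le_trans (ler_norm _) (norm_mean_le _ (state_law_dist n pi_pol)).
rewrite -mulr_suml mulrC ler_wpM2l ?geometric_sum_le //.
exact: sumr_ge0.
Qed.


Lemma bellman_residualE pi V y :
  bellman_residual pi V y = \sum_a pi y a * action_value V y a - V y.
Proof.
rewrite /bellman_residual /action_value; congr (_ - _).
under [RHS]eq_bigr do rewrite mulrDr mulrCA.
rewrite big_split -mulr_sumr /=; congr (_ + gamma * _).
rewrite /mean /policy_transition; under [LHS]eq_bigr do rewrite mulr_suml.
rewrite exchange_big /=; apply: eq_bigr => a _; rewrite mulr_sumr.
by apply: eq_bigr => z _; rewrite mulrA.
Qed.

Lemma policy_evaluation pi : Policies pi ->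
  exists V : X -> R, forall y, bellman_residual pi V y = 0.
Proof.
move=> pi_pol.
pose P : 'M[R]_#|X| := \matrix_(i, j) policy_transition pi (enum_val i) (enum_val j).
have sum_rank (F : X -> R) : \sum_(j : 'I_#|X|) F (enum_val j) = \sum_z F z.
  rewrite (reindex (@enum_rank X)) /=; last exact/onW_bij/enum_rank_bij.
  by apply: eq_bigr => z _; rewrite enum_rankK.
have P_unit : 1%:M - gamma *: P \in unitmx.
  apply: unitmx_discounted_stochastic => // [i j|i]; rewrite ?mxE.
    exact: (policy_transition_dist _ pi_pol).1.
  under eq_bigr do rewrite mxE.
  by rewrite (sum_rank (policy_transition pi _)) (policy_transition_dist _ pi_pol).2.
pose v := invmx (1%:M - gamma *: P) *m \col_i policy_reward pi (enum_val i).
have /matrixP v_fix : v - gamma *: (P *m v) = \col_i policy_reward pi (enum_val i).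
  by rewrite scalemxAl -[X in X - _]mul1mx -mulmxBl /v mulmxA mulmxV ?mul1mx.
clearbody v; exists (fun y => v (enum_rank y) 0) => y; apply/eqP; rewrite subr_eq0.
have := v_fix (enum_rank y) 0; rewrite !mxE enum_rankK => <-.
suff -> : \sum_j P (enum_rank y) j * v j 0 =
          mean (policy_transition pi y) (fun z => v (enum_rank z) 0) by rewrite subrK.
rewrite /mean -sum_rank; apply: eq_bigr => j _.
by rewrite mxE enum_rankK enum_valK.
Qed.

(* The greedy policy for [V] has residual [max_a Q(y, a) - V y], which dominates
   the residual [sum_a pi(a | y) Q(y, a) - V y = 0] of [pi]. *)
Lemma greedy_deterministic pi V : Policies pi ->
  (forall y, bellman_residual pi V y = 0) ->
  exists pi', Policies pi' /\ deterministic pi' /\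
    forall y, 0 <= bellman_residual pi' V y.
Proof.
move=> pi_pol res0.
pose best y := [arg max_(b > enum_val (Ordinal (dist_card_gt0 (pi_pol y))))
                  action_value V y b]%O.
have best_max y a : action_value V y a <= action_value V y (best y).
  by rewrite /best; case: arg_maxP => // b _; apply.
pose pi' y b : R := if b == best y then 1 else 0.
have sum_pi' y (F : A -> R) : \sum_b pi' y b * F b = F (best y).
  rewrite (bigD1 (best y)) //= /pi' eqxx mul1r big1 ?addr0 //.
  by move=> b /negbTE ->; rewrite mul0r.
exists pi'; split; [|split].
- move=> y; split; first by move=> b; rewrite /pi'; case: ifP.
  by under eq_bigr do rewrite -[pi' y _]mulr1; rewrite sum_pi'.
- by move=> y; exists (best y).
- move=> y; rewrite bellman_residualE sum_pi' subr_ge0.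
  move/eqP: (res0 y); rewrite bellman_residualE subr_eq0 => /eqP <-.
  apply: (@le_trans _ _ (\sum_a pi y a * action_value V y (best y))).
    by apply: ler_sum => a _; apply: ler_wpM2l; [exact: (pi_pol y).1 | exact: best_max].
  by rewrite -mulr_suml (pi_pol y).2 mul1r.
Qed.

Lemma deterministic_improvement pi : Policies pi ->
  exists pi', Policies pi' /\ deterministic pi' /\
    J p r gamma pi mu <= J p r gamma pi' mu.
Proof.
move=> pi_pol; have [V res0] := policy_evaluation pi_pol.
have [pi' [pi'_pol [pi'_det res'_ge0]]] := greedy_deterministic pi_pol res0.
exists pi'; split => //; split => //.
have D0 : discounted_residual pi V = fun _ => 0.
  apply/funext => N; apply: big1 => n _.
  by rewrite /mean big1 ?mulr0 // => y _; rewrite res0 mulr0.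
have D'_cvg := is_cvgn_discounted_residual pi'_pol res'_ge0.
rewrite (J_residual (V := V) pi_pol) ?D0 ?(J_residual pi'_pol D'_cvg); last exact: is_cvg_cst.
rewrite lim_cst // lerD2l; apply: limr_ge => //; apply: nearW => N.
apply: sumr_ge0 => n _; apply: mulr_ge0; first exact: exprn_ge0.
apply: sumr_ge0 => y _.
by apply: mulr_ge0; [exact: (state_law_dist n pi'_pol).1 | exact: res'_ge0].
Qed.

Lemma unique_best_response_deterministic pi :
  BR p r gamma mu = [set pi] -> Policies pi /\ deterministic pi.
Proof.
move=> BR1; have [pi_pol pi_opt] : BR p r gamma mu pi by rewrite BR1.
have [pi' [pi'_pol [pi'_det J_le]]] := deterministic_improvement pi_pol.
suff <- : pi' = pi by [].
have : BR p r gamma mu pi'.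
  by split=> // pi'' pi''_pol; exact: le_trans (pi_opt _ pi''_pol) J_le.
by rewrite BR1.
Qed.

End PolicyEvaluation.

Lemma continuous_pointwise (T : topologicalType) (U : Type) (K : topologicalType)
    (g : T -> U -> K) :
  (forall u, continuous (fun t => g t u)) -> continuous g.
Proof.
move=> g_cont t.
have := @cvg_sup (U -> K) U
  (fun u => Topological.class (initial_topology (fun h : U -> K => h u))) (g @ t) (g t).
move=> /(_ _) [] // _; apply => u.
exact: (@continuous_comp_initial (U -> K) T K (fun h : U -> K => h u) g (g_cont u) t).
Qed.

Lemma connected_01_eq {R : realType} {E : set R} {a b : R} : connected E ->
  (forall z, E z -> z = 0 \/ z = 1) -> E a -> E b -> a = b.
Proof.
move=> /connected_intervalP E_itv E01 Ea Eb.
have half_mul : (2^-1 : R) * 2 = 1 by rewrite mulVf // pnatr_eq0.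
have no_half : ~ E 2^-1 by move/E01 => [] half; rewrite half in half_mul; lra.
have half_ge0 : (0 : R) <= 2^-1 by rewrite invr_ge0 ler0n.
have half_le1 : (2^-1 : R) <= 1 by lra.
have [a0|a1] := E01 _ Ea; have [b0|b1] := E01 _ Eb; subst a b => //; exfalso.
  by apply/no_half/(E_itv 0 1 Ea Eb); rewrite half_ge0 half_le1.
by apply/no_half/(E_itv 0 1 Eb Ea); rewrite half_ge0 half_le1.
Qed.

Section ContinuousDeterministicSelection.
Variables (R : realType) (X A : finType).

Definition segment_point (mu nu : X -> R) (t : R) : X -> R :=
  fun y => mu y + t * (nu y - mu y).

Lemma continuous_segment_point mu nu : continuous (segment_point mu nu).
Proof.
apply: continuous_pointwise => y t.
by apply: cvgD; [exact: cvg_cst | apply: cvgMr_tmp; exact: cvg_id].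
Qed.

Lemma Delta_segment_point mu nu t : Delta mu -> Delta nu -> 0 <= t <= 1 ->
  Delta (segment_point mu nu t).
Proof.
move=> [mu0 mu1] [nu0 nu1] /andP[t0 t1]; split.
  move=> y; rewrite /segment_point.
  have -> : mu y + t * (nu y - mu y) = (1 - t) * mu y + t * nu y by ring.
  by rewrite addr_ge0 // mulr_ge0 // subr_ge0.
by rewrite /segment_point big_split /= -mulr_sumr sumrB mu1 nu1 subrr mulr0 addr0.
Qed.

Lemma deterministic_continuous_constant (f : (X -> R) -> X -> A -> R) :
  {within @Delta R X, continuous f} ->
  (forall mu, Delta mu -> deterministic (f mu)) ->
  forall mu nu, Delta mu -> Delta nu -> f mu = f nu.
Proof.
move=> f_cont f_det mu nu mu_D nu_D; apply/funext => x; apply/funext => a.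
have seg_D : segment_point mu nu @` `[0, 1] `<=` @Delta R X.
  by move=> _ [t t01 <-]; apply: Delta_segment_point.
have coord_cont : continuous (fun h : X -> A -> R => h x a).
  move=> h; apply: (@continuous_comp _ _ _ (fun h : X -> A -> R => h x) (fun g => g a)).
    exact: proj_continuous.
  exact: proj_continuous.
set E := (fun h : X -> A -> R => h x a) @` (f @` (segment_point mu nu @` `[0, 1])).
have E_conn : connected E.
  apply: (connected_continuous_connected _ (continuous_subspaceT coord_cont)).
  apply: (connected_continuous_connected _ (continuous_subspaceW seg_D f_cont)).
  exact: (connected_continuous_connected (@segment_connected R 0 1)
    (continuous_subspaceT (continuous_segment_point (mu := mu) (nu := nu)))).
apply: (connected_01_eq E_conn).
- move=> _ [_ [_ [t t01 <-] <-] <-].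
  have [b ->] := f_det _ (seg_D _ (ex_intro2 _ _ t t01 erefl)) x.
  by case: (a == b); [right | left].
- exists (f mu) => //; exists mu => //; exists 0; first by rewrite /= in_itv /= lexx ler01.
  by apply/funext => y; rewrite /segment_point mul0r addr0.
- exists (f nu) => //; exists nu => //; exists 1; first by rewrite /= in_itv /= lexx ler01.
  by apply/funext => y; rewrite /segment_point mul1r addrC subrK.
Qed.

End ContinuousDeterministicSelection.

Theorem mainTheorem2 (R : realType) (X A : finType)
    (p : X -> A -> (X -> R) -> X -> R) (r : X -> A -> (X -> R) -> R)
    (gamma : R) (f : (X -> R) -> (X -> A -> R)) :
  (forall x a mu, Delta mu -> is_dist (p x a mu)) ->
  0 <= gamma -> gamma < 1 ->
  (forall mu, Delta mu -> BR p r gamma mu = [set f mu]) ->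
  {within @Delta R X, continuous f} ->
  exists pi : X -> A -> R,
    @Policies R X A pi /\ deterministic pi /\
    forall mu, Delta mu -> BR p r gamma mu = [set pi].
Proof.
move=> p_dist gamma_ge0 gamma_lt1 BR_f f_cont.
have f_opt mu (mu_D : Delta mu) : Policies (f mu) /\ deterministic (f mu) :=
  unique_best_response_deterministic (fun x a => p_dist x a mu mu_D)
    gamma_ge0 gamma_lt1 mu_D (BR_f _ mu_D).
have [[mu0 mu0_D] | Delta0] := pselect (exists mu, @Delta R X mu).
  have [f_pol f_det] := f_opt mu0 mu0_D.
  exists (f mu0); split=> //; split=> // mu mu_D.
  rewrite BR_f // (deterministic_continuous_constant f_cont _ mu_D mu0_D) //.
  by move=> nu /f_opt[].
have X0 (x : X) : False.
  apply: Delta0; exists (fun y => (y == x)%:R); split=> [y|]; first exact: ler0n.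
  by rewrite (bigD1 x) //= eqxx big1 ?addr0 // => y /negbTE ->.
exists (fun _ _ => 0); split; [|split] => [x | x | mu mu_D].
- by case: (X0 x).
- by case: (X0 x).
- by case: Delta0; exists mu.
Qed.
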